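(* Let $G$ be a graph with $V(G)=\{u_1,\ldots,u_n\}$ such that $\{u_1,\ldots,u_\ell\}$ induces a clique in $G$ and $\ell<n$. If $H_1,\ldots,H_\ell$ are pairwise disjoint complete graphs and $H_{\ell+1},\ldots,H_n$ are pairwise disjoint graphs (all $H_1,\ldots,H_n$ pairwise disjoint), then $box(G[H_1,H_2,\ldots,H_n])\leq \sum_{i=\ell+1}^{n} box(H_i)$.
   Context: All graphs are simple, finite and undirected. For a graph $G$ with vertex set $\{u_1,\ldots,u_n\}$ and pairwise disjoint graphs $H_1,\ldots,H_n$, the $G$-generalized join $G[H_1,\ldots,H_n]$ is the graph obtained from $G$ by replacing each vertex $u_i$ by $H_i$ and joining every vertex of $H_i$ to every vertex of $H_j$ whenever $u_i$ is adjacent to $u_j$ in $G$. The boxicity $box(G)$ is the least positive integer $\ell$ such that $G$ is isomorphic to the intersection graph of a family of $\ell$-boxes (Cartesian products of $\ell$ closed bounded real intervals). *)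

From Stdlib Require Import Reals ClassicalEpsilon.
From mathcomp Require Import all_boot.
Set Implicit Arguments. Unset Strict Implicit. Unset Printing Implicit Defensive.

Definition simple_graph (T : finType) (e : rel T) : Prop :=
  (forall x y, e x y = e y x) /\ (forall x, ~~ e x x).

(* A d-box is the product of d closed bounded intervals [fst (b k), snd (b k)]. *)
Definition box (d : nat) := 'I_d -> (R * R)%type.

Definition is_box (d : nat) (b : box d) : Prop :=
  forall k, Rle (fst (b k)) (snd (b k)).

Definition boxes_meet (d : nat) (b c : box d) : Prop :=
  forall k, Rle (fst (b k)) (snd (c k)) /\ Rle (fst (c k)) (snd (b k)).

Definition box_rep (T : finType) (e : rel T) (d : nat) : Prop :=
  exists f : T -> box d,
    (forall x, is_box (f x)) /\
    (forall x y, x != y -> (e x y <-> boxes_meet (f x) (f y))).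

Definition box_ok_b (T : finType) (e : rel T) (d : nat) : bool :=
  if excluded_middle_informative ((0 < d)%N /\ box_rep e d) then true else false.

(* boxicity: least positive d such that a d-box representation exists
   (0 if none exists, which never happens for finite graphs). *)
Definition boxicity (T : finType) (e : rel T) : nat :=
  match excluded_middle_informative (exists d, box_ok_b e d) with
  | left h => ex_minn h
  | right _ => 0
  end.

(* The G-generalized join G[H_1,...,H_n]: vertex set is the disjoint union
   {i : 'I_n & T i}; (i,x) ~ (j,y) iff (i = j and x ~_{H_i} y) or i ~_G j. *)
Definition gjoin (n : nat) (G : rel 'I_n) (T : 'I_n -> finType)
    (H : forall i, rel (T i)) : rel {i : 'I_n & T i} :=
  fun u v =>
    G (tag u) (tag v) ||
    (if tag u =P tag v is ReflectT eq_ij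
     then H (tag v) (ecast k (T k) eq_ij (tagged u)) (tagged v)
     else false).

(* Give the join one coordinate for each coordinate of an optimal box
   representation of each part H_i outside the clique (clique parts get none).
   On a coordinate belonging to H_i, the vertices of H_i keep their own
   intervals, squashed into (-2, 2) by atan, while a vertex of another part
   H_a gets [-2, 2] if a ~ i in G and [2, 2] otherwise.  Two vertices of the
   same part then meet exactly where they met in H_i; two vertices of
   different parts a, b meet on every coordinate iff a ~ b, or a and b both
   lie in the clique and own no coordinate, in which case they are adjacent
   anyway. *)
From Stdlib Require Import Reals Lra ClassicalEpsilon.
From mathcomp Require Import all_boot.
Set Implicit Arguments. Unset Strict Implicit. Unset Printing Implicit Defensive.

Section Intervals.
Local Open Scope R_scope.

Definition itv_meet (p q : R * R) : Prop := fst p <= snd q /\ fst q <= snd p.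

Lemma itv_meetC p q : itv_meet p q <-> itv_meet q p.
Proof. by rewrite /itv_meet; split=> -[]. Qed.

Lemma atan_le a b : a <= b <-> atan a <= atan b.
Proof.
split=> [[/atan_increasing|->]|le_ab]; try lra.
by case: (Rle_or_lt a b) => // /atan_increasing; lra.
Qed.

Definition squash (p : R * R) : R * R := (atan (fst p), atan (snd p)).

Lemma squash_itv p : fst p <= snd p -> fst (squash p) <= snd (squash p).
Proof. by move/atan_le. Qed.

Lemma squash_meet p q : itv_meet (squash p) (squash q) <-> itv_meet p q.
Proof. by rewrite /itv_meet /= -!atan_le. Qed.

Lemma squash_bound p :
  -2 < fst (squash p) < 2 /\ -2 < snd (squash p) < 2.
Proof.
have := atan_bound (fst p); have := atan_bound (snd p); have := PI_4.
rewrite /=; lra.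
Qed.

Definition link_itv (b : bool) : R * R := if b then (-2, 2) else (2, 2).

Lemma link_itv_le b : fst (link_itv b) <= snd (link_itv b).
Proof. by case: b => /=; lra. Qed.

Lemma link_itv_meet b c : itv_meet (link_itv b) (link_itv c).
Proof. by rewrite /itv_meet; case: b; case: c => /=; lra. Qed.

Lemma squash_link_meet p b : itv_meet (squash p) (link_itv b) <-> b.
Proof.
have := squash_bound p; rewrite /itv_meet; case: b => /=; split=> //; lra.
Qed.

End Intervals.

Definition box_rep_on (T : finType) (e : rel T) (K : finType) : Prop :=
  exists f : T -> K -> (R * R)%type,
    (forall x k, Rle (fst (f x k)) (snd (f x k))) /\
    (forall x y, x != y -> (e x y <-> forall k, itv_meet (f x k) (f y k))).

Section BoxRepresentations.
Variables (T : finType) (e : rel T).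
Local Open Scope R_scope.

Lemma box_rep_on_card (K : finType) : box_rep_on e K -> box_rep e #|K|.
Proof.
move=> [f [f_itv f_meet]]; exists (fun x k => f x (enum_val k)); split.
  by move=> x k; apply: f_itv.
move=> x y xy; rewrite (f_meet _ _ xy); split=> [meet_xy k|meet_xy k].
  exact: meet_xy.
by rewrite -(enum_rankK k); apply: meet_xy.
Qed.

Lemma box_rep_on_complete (K : finType) :
  #|K| = 0%N -> (forall x y, x != y -> e x y) -> box_rep_on e K.
Proof.
move=> /card0_eq K0 e_complete; exists (fun _ _ => (R0, R0)).
split=> [_ k|x y xy]; first by have := K0 k.
by split=> [_ k|_]; [have := K0 k | exact: e_complete].
Qed.

Definition sep_itv (p q x : T) : R * R :=
  if x == p then (0, 0) else if x == q then (1, 1) else (0, 1).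

Lemma sep_itv_meet p q x y : x != y ->
  itv_meet (sep_itv p q x) (sep_itv p q y) <->
  ~~ ([&& x == p & y == q] || [&& x == q & y == p]).
Proof.
move=> xy; rewrite /sep_itv /itv_meet.
case xp: (x == p); case yp: (y == p); case xq: (x == q); case yq: (y == q) => /=.
all: try by move: xy; rewrite (eqP xp) (eqP yp) eqxx.
all: try by move: xy; rewrite (eqP xq) (eqP yq) eqxx.
all: by split=> //= h; try case: h => *; lra.
Qed.

(* One coordinate per non-adjacent pair [(p, q)], separating exactly p from q;
   the extra coordinate [None] only makes the dimension positive. *)
Lemma box_rep_on_pairs : simple_graph e -> box_rep_on e (option (T * T)).
Proof.
move=> [e_sym _].
pose f x (k : option (T * T)) :=
  if k is Some (p, q) then (if e p q then (0, 1) else sep_itv p q x)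
  else (0, 1).
exists f; split=> [x [[p q]|]|x y xy]; rewrite /f /=.
- by rewrite /sep_itv; (do 3?case: ifP => _); rewrite /=; lra.
- lra.
split=> [exy [[p q]|]|meet_xy]; rewrite /=; [|rewrite /itv_meet /=; lra|].
- case: ifP => [_|epq]; first by rewrite /itv_meet /=; lra.
  apply/(sep_itv_meet _ _ xy); apply: contraFN epq.
  by case/orP=> /andP[/eqP<- /eqP<-]; rewrite // e_sym.
- apply: contraT => /negbTE nexy.
  have /= := meet_xy (Some (x, y)); rewrite nexy => /(sep_itv_meet _ _ xy).
  by rewrite !eqxx.
Qed.

Lemma box_ok_bP d : box_ok_b e d <-> (0 < d)%N /\ box_rep e d.
Proof. by rewrite /box_ok_b; case: excluded_middle_informative. Qed.

Lemma box_ok_b_boxicity : simple_graph e -> box_ok_b e (boxicity e).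
Proof.
move=> e_simple; rewrite /boxicity; case: excluded_middle_informative => [ex|[]].
  by case: ex_minnP.
exists #|{: option (T * T)}|; apply/box_ok_bP; split; first by rewrite card_option.
exact/box_rep_on_card/box_rep_on_pairs.
Qed.

Lemma boxicity_gt0 : simple_graph e -> (0 < boxicity e)%N.
Proof. by move/box_ok_b_boxicity/box_ok_bP => []. Qed.

Lemma box_rep_on_boxicity : simple_graph e -> box_rep_on e 'I_(boxicity e).
Proof. by move/box_ok_b_boxicity/box_ok_bP => [_]. Qed.

Lemma boxicity_min (K : finType) :
  (0 < #|K|)%N -> box_rep_on e K -> (boxicity e <= #|K|)%N.
Proof.
move=> K_gt0 /box_rep_on_card rep; rewrite /boxicity.
case: excluded_middle_informative => [ex|[]]; last by exists #|K|; apply/box_ok_bP.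
by case: ex_minnP => d _; apply; apply/box_ok_bP.
Qed.

End BoxRepresentations.

Section GeneralizedJoin.
Variables (n : nat) (G : rel 'I_n) (T : 'I_n -> finType) (H : forall i, rel (T i)).

Lemma gjoin_same i (x y : T i) :
  ~~ G i i -> gjoin G H (Tagged T x) (Tagged T y) = H x y.
Proof.
move=> /negbTE Gii; rewrite /gjoin /= Gii /=; case: eqP => // e.
by rewrite (eq_irrelevance e erefl).
Qed.

Lemma gjoin_diff a b (x : T a) (y : T b) :
  a != b -> gjoin G H (Tagged T x) (Tagged T y) = G a b.
Proof.
move=> ab; rewrite /gjoin /=; case: eqP => [eab|_]; last by rewrite orbF.
by rewrite eab eqxx in ab.
Qed.

Variables (K : 'I_n -> finType) (F : forall i, T i -> K i -> (R * R)%type).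
Hypothesis G_simple : simple_graph G.
Hypothesis F_itv : forall i (x : T i) k, Rle (fst (F x k)) (snd (F x k)).
Hypothesis F_meet :
  forall i (x y : T i), x != y -> (H x y <-> forall k, itv_meet (F x k) (F y k)).
Hypothesis uncovered_adj :
  forall a b, a != b -> #|K a| = 0 -> #|K b| = 0 -> G a b.

Definition join_itv (u : {i : 'I_n & T i}) (k : {i : 'I_n & K i}) : R * R :=
  if tag u =P tag k is ReflectT e
  then squash (F (ecast j (T j) e (tagged u)) (tagged k))
  else link_itv (G (tag k) (tag u)).

Lemma join_itv_same i (x : T i) (k : K i) :
  join_itv (Tagged T x) (Tagged K k) = squash (F x k).
Proof.
by rewrite /join_itv /=; case: eqP => // e; rewrite (eq_irrelevance e erefl).
Qed.

Lemma join_itv_diff a i (x : T a) (k : K i) :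
  a != i -> join_itv (Tagged T x) (Tagged K k) = link_itv (G i a).
Proof.
by move=> ai; rewrite /join_itv /=; case: eqP => // eai; rewrite eai eqxx in ai.
Qed.

Lemma join_itv_le u k : Rle (fst (join_itv u k)) (snd (join_itv u k)).
Proof.
case: u k => [a x] [i k]; have [eai|ai] := eqVneq a i.
  by subst a; rewrite join_itv_same; apply/squash_itv/F_itv.
by rewrite join_itv_diff //; apply: link_itv_le.
Qed.

Lemma join_itv_meet_same a (x y : T a) : x != y ->
  H x y <-> forall k, itv_meet (join_itv (Tagged T x) k) (join_itv (Tagged T y) k).
Proof.
move=> xy; rewrite (F_meet xy); split=> [meet_xy [i k]|meet_xy k].
  have [eai|ai] := eqVneq a i.
    by subst a; rewrite !join_itv_same; apply/squash_meet.
  by rewrite !join_itv_diff //; apply: link_itv_meet.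
by have := meet_xy (Tagged K k); rewrite !join_itv_same => /squash_meet.
Qed.

Lemma join_itv_meet_diff a b (x : T a) (y : T b) : a != b ->
  G a b <-> forall k, itv_meet (join_itv (Tagged T x) k) (join_itv (Tagged T y) k).
Proof.
case: G_simple => G_sym _ ab; split=> [Gab [i k]|meet_xy].
  have [eai|ai] := eqVneq a i.
    subst a; rewrite join_itv_same join_itv_diff 1?eq_sym //.
    exact/squash_link_meet.
  have [ebi|bi] := eqVneq b i.
    subst b; rewrite join_itv_same join_itv_diff //.
    by apply/itv_meetC/squash_link_meet; rewrite G_sym.
  by rewrite !join_itv_diff //; apply: link_itv_meet.
have [Ka0|/card_gt0P[k _]] := posnP #|K a|; last first.
  have := meet_xy (Tagged K k).
  by rewrite join_itv_same join_itv_diff 1?eq_sym // => /squash_link_meet.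
have [Kb0|/card_gt0P[k _]] := posnP #|K b|; last first.
  have := meet_xy (Tagged K k); rewrite join_itv_diff // join_itv_same.
  by move/itv_meetC/squash_link_meet; rewrite G_sym.
exact: uncovered_adj.
Qed.

End GeneralizedJoin.

Lemma box_rep_on_gjoin n (G : rel 'I_n) (T : 'I_n -> finType)
    (H : forall i, rel (T i)) (K : 'I_n -> finType) :
  simple_graph G -> (forall i, box_rep_on (H i) (K i)) ->
  (forall a b, a != b -> #|K a| = 0 -> #|K b| = 0 -> G a b) ->
  box_rep_on (gjoin G H) {i : 'I_n & K i}.
Proof.
move=> G_simple /fin_all_exists[F F_rep] uncovered_adj.
have F_itv i := (F_rep i).1; have F_meet i := (F_rep i).2.
exists (join_itv G F); split=> [u k|[a x] [b y] uv]; first exact: join_itv_le.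
have [eab|ab] := eqVneq a b; last first.
  by rewrite gjoin_diff //; apply: join_itv_meet_diff.
subst b; have xy : x != y by apply: contraNneq uv => ->.
by rewrite gjoin_same; [apply: join_itv_meet_same | case: G_simple].
Qed.

Theorem theorem3p4 (n l : nat) (G : rel 'I_n) (T : 'I_n -> finType)
    (H : forall i, rel (T i)) :
  simple_graph G ->
  (forall i, simple_graph (H i)) ->
  (forall i, 0 < #|T i|) ->
  (forall i j : 'I_n, i < l -> j < l -> i != j -> G i j) ->
  l < n ->
  (forall i : 'I_n, i < l -> forall x y : T i, x != y -> H i x y) ->
  boxicity (gjoin G H) <= \sum_(i < n | l <= i) boxicity (H i).
Proof.
move=> G_simple H_simple _ clique lt_l_n H_complete.
pose K (i : 'I_n) := 'I_(if l <= i then boxicity (H i) else 0).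
have covered (i : 'I_n) : l <= i -> 0 < #|K i|.
  by move=> le_l_i; rewrite card_ord le_l_i boxicity_gt0.
have rep_H (i : 'I_n) : box_rep_on (H i) (K i).
  rewrite /K; case: ifP => [_|/negbT]; first exact: box_rep_on_boxicity.
  rewrite -ltnNge => lt_i_l.
  by apply: box_rep_on_complete; [apply: card_ord | apply: H_complete].
have uncovered_adj a b : a != b -> #|K a| = 0 -> #|K b| = 0 -> G a b.
  move=> ab Ka0 Kb0; apply: clique ab; rewrite ltnNge; apply/negP => /covered.
    by rewrite Ka0.
  by rewrite Kb0.
have card_K : #|{: {i : 'I_n & K i}}| = \sum_(i < n | l <= i) boxicity (H i).
  rewrite card_tagged sumnE big_map big_enum /= [RHS]big_mkcond /=.
  by apply: eq_bigr => i _; rewrite card_ord.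
rewrite -card_K; apply: boxicity_min; last exact: box_rep_on_gjoin.
have /card_gt0P[k _] := covered (Ordinal lt_l_n) (leqnn l).
by apply/card_gt0P; exists (Tagged K k).
Qed.
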